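(* The category $\mathsf{HSLat}$ of Heyting semilattices is not action accessible.
   Context: A Heyting semilattice is a meet-semilattice with top $1$ and an operation $\Rightarrow$ with $x\wedge y\le z$ iff $x\le y\Rightarrow z$; morphisms preserve $1,\wedge,\Rightarrow$; $\mathsf{HSLat}$ is semi-abelian. For an object $X$ of a semi-abelian category $\mathcal C$, $\mathsf{SpltExt}_{\mathcal C}(X)$ is the category of split extensions $X\xrightarrow{\kappa}A\rightleftarrows B$ (with $\alpha\colon A\to B$, $\beta\colon B\to A$, $\alpha\beta=1_B$, $\kappa=\ker\alpha$), whose morphisms are morphisms of extensions which are the identity on $X$ and commute with the sections. An object of a category is subterminal if every object admits at most one morphism into it; a category has enough subterminal objects if every object admits a morphism into a subterminal object. $\mathcal C$ is action accessible if for every object $X$, $\mathsf{SpltExt}_{\mathcal C}(X)$ has enough subterminal objects. *)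

(** Heyting semilattices, as algebras (meet-semilattice with top 1,
    order x <= y :<-> x /\ y = x, and an implication residuating meet). *)
Record HSL := MkHSL {
  car :> Type;
  hmeet : car -> car -> car;
  htop : car;
  himp : car -> car -> car;
  hmeetA : forall x y z, hmeet x (hmeet y z) = hmeet (hmeet x y) z;
  hmeetC : forall x y, hmeet x y = hmeet y x;
  hmeetxx : forall x, hmeet x x = x;
  hmeet_top : forall x, hmeet x htop = x;
  hresid : forall x y z,
    hmeet (hmeet x y) z = hmeet x y <-> hmeet x (himp y z) = x
}.
Arguments hmeet {h}.
Arguments htop {h}.
Arguments himp {h}.

Record hom (A B : HSL) := MkHom {
  hfun :> A -> B;
  hom_top : hfun htop = htop;
  hom_meet : forall x y, hfun (hmeet x y) = hmeet (hfun x) (hfun y);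
  hom_imp : forall x y, hfun (himp x y) = himp (hfun x) (hfun y)
}.

(** [k] is a kernel of [a] in HSLat: the zero object is the one-element
    algebra, so the zero morphism Y -> B is the constant map at 1. *)
Definition is_kernel {X A B : HSL} (k : hom X A) (a : hom A B) : Prop :=
  (forall x, a (k x) = htop) /\
  (forall (Y : HSL) (f : hom Y A), (forall y, a (f y) = htop) ->
     exists g : hom Y X, (forall y, k (g y) = f y) /\
       (forall g' : hom Y X, (forall y, k (g' y) = f y) -> forall y, g' y = g y)).

Record SplitExt (X : HSL) := MkSplitExt {
  seA : HSL;
  seB : HSL;
  kappa : hom X seA;
  alpha : hom seA seB;
  beta : hom seB seA;
  alpha_beta : forall b, alpha (beta b) = b;
  kappa_ker : is_kernel kappa alpha
}.
Arguments seA {X}.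
Arguments seB {X}.
Arguments kappa {X}.
Arguments alpha {X}.
Arguments beta {X}.

Record se_mor {X : HSL} (E E' : SplitExt X) := MkSeMor {
  morA : hom (seA E) (seA E');
  morB : hom (seB E) (seB E');
  mor_kappa : forall x, morA (kappa E x) = kappa E' x;
  mor_alpha : forall a, alpha E' (morA a) = morB (alpha E a);
  mor_beta : forall b, morA (beta E b) = beta E' (morB b)
}.
Arguments morA {X E E'}.
Arguments morB {X E E'}.

Definition subterminal {X : HSL} (S : SplitExt X) : Prop :=
  forall (E : SplitExt X) (m1 m2 : se_mor E S),
    (forall a, morA m1 a = morA m2 a) /\ (forall b, morB m1 b = morB m2 b).

Definition enough_subterminal (X : HSL) : Prop :=
  forall E : SplitExt X, exists S : SplitExt X, subterminal S /\ inhabited (se_mor E S).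

Definition action_accessible_HSLat : Prop :=
  forall X : HSL, enough_subterminal X.

From Stdlib Require Import Arith Lia.

(* Take X = 2, the split extension E4 : 2 -> 4 <=> 3 of chains (the Artin
   glueing of 3 -> 2 sending 0 and m to 0) and E3 : 2 -> 3 <=> 2.  Two
   morphisms U1, U2 : E3 -> E4 differ only in sending the bottom of the base to
   0 or to m.  A morphism F from E4 to a subterminal object must equalise them,
   so F identifies 0 and m in the base and hence sends m => 0 = 0 to 1.  Then F
   sends beta(0) <= kappa(0) to 1, so the kernel of the target identifies 0
   with 1; but kernels are monomorphisms. *)

Section HeytingSemilatticeFacts.
Variable A : HSL.

Lemma hmeet_topl (x : A) : hmeet htop x = x.
Proof. rewrite hmeetC; apply hmeet_top. Qed.

Lemma himpxx (x : A) : himp x x = htop.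
Proof.
  rewrite <- (hmeet_topl (himp x x)).
  apply hresid.
  rewrite hmeet_topl, hmeetxx; reflexivity.
Qed.

End HeytingSemilatticeFacts.

Lemma hom_imp_eq_top {A B : HSL} (f : hom A B) (x y : A) :
  f x = f y -> f (himp x y) = htop.
Proof. intros Hxy; rewrite hom_imp, Hxy; apply himpxx. Qed.

Lemma hom_top_le {A B : HSL} (f : hom A B) (a b : A) :
  hmeet a b = a -> f a = htop -> f b = htop.
Proof.
  intros Hab Ha.
  rewrite <- (hmeet_topl _ (f b)), <- Ha, <- hom_meet, Hab; reflexivity.
Qed.

Definition zero_hom (A B : HSL) : hom A B :=
  MkHom A B (fun _ => htop) eq_refl
    (fun _ _ => eq_sym (hmeetxx B htop)) (fun _ _ => eq_sym (himpxx B htop)).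

Definition id_hom (A : HSL) : hom A A :=
  MkHom A A (fun x => x) eq_refl (fun _ _ => eq_refl) (fun _ _ => eq_refl).

Definition comp_hom {A B C : HSL} (g : hom B C) (f : hom A B) : hom A C.
Proof.
  refine (MkHom A C (fun x => g (f x)) _ _ _); intros.
  - rewrite !hom_top; reflexivity.
  - rewrite !hom_meet; reflexivity.
  - rewrite !hom_imp; reflexivity.
Defined.

Definition comp_mor {X : HSL} {E1 E2 E3 : SplitExt X}
  (g : se_mor E2 E3) (f : se_mor E1 E2) : se_mor E1 E3.
Proof.
  refine (MkSeMor X E1 E3 (comp_hom (morA g) (morA f))
            (comp_hom (morB g) (morB f)) _ _ _); simpl; intros.
  - rewrite !mor_kappa; reflexivity.
  - rewrite !mor_alpha; reflexivity.
  - rewrite !mor_beta; reflexivity.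
Defined.

Lemma is_kernel_mono {X A B : HSL} (k : hom X A) (a : hom A B) :
  is_kernel k a -> forall (Y : HSL) (g1 g2 : hom Y X),
  (forall y, k (g1 y) = k (g2 y)) -> forall y, g1 y = g2 y.
Proof.
  intros [Hka Huniq] Y g1 g2 Hg y.
  destruct (Huniq Y (comp_hom k g2) (fun y => Hka (g2 y))) as [g [_ Hg_uniq]].
  rewrite (Hg_uniq g1 Hg), (Hg_uniq g2 (fun _ => eq_refl)); reflexivity.
Qed.

Lemma is_kernel_of_retraction {X A B : HSL} (k : hom X A) (a : hom A B)
  (r : A -> X)
  (Hka : forall x, a (k x) = htop)
  (k_r : forall z, a z = htop -> k (r z) = z)
  (r_top : r htop = htop)
  (r_meet : forall z w, a z = htop -> a w = htop ->
     r (hmeet z w) = hmeet (r z) (r w))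
  (r_imp : forall z w, a z = htop -> a w = htop ->
     r (himp z w) = himp (r z) (r w))
  (k_inj : forall x y, k x = k y -> x = y) : is_kernel k a.
Proof.
  split; [exact Hka|].
  intros Y f Hf.
  unshelve eexists (MkHom Y X (fun y => r (f y)) _ _ _).
  - simpl; rewrite hom_top; exact r_top.
  - intros; simpl; rewrite hom_meet; apply r_meet; apply Hf.
  - intros; simpl; rewrite hom_imp; apply r_imp; apply Hf.
  - split.
    + intros y; simpl; apply k_r, Hf.
    + intros g' Hg' y; apply k_inj; rewrite Hg'; simpl; rewrite k_r; auto.
Qed.

Section Chain.
Variables (T : Type) (rank : T -> nat) (top : T).
Hypothesis rank_inj : forall x y, rank x = rank y -> x = y.
Hypothesis rank_top : forall x, rank x <= rank top.

Definition cmeet (x y : T) : T := if rank x <=? rank y then x else y.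
Definition cimp (x y : T) : T := if rank x <=? rank y then top else y.

Lemma eq_rank (x y : T) : x = y <-> rank x = rank y.
Proof. split; [intros ->; reflexivity | apply rank_inj]. Qed.

Lemma rank_cmeet (x y : T) : rank (cmeet x y) = Nat.min (rank x) (rank y).
Proof. unfold cmeet; destruct (Nat.leb_spec (rank x) (rank y)); lia. Qed.

Lemma rank_cimp (x y : T) :
  rank (cimp x y) = if rank x <=? rank y then rank top else rank y.
Proof. unfold cimp; destruct (rank x <=? rank y); reflexivity. Qed.

Definition chain : HSL.
Proof.
  refine (MkHSL T cmeet top cimp _ _ _ _ _); intros;
    rewrite ?eq_rank, ?rank_cmeet, ?rank_cimp.
  1-3: lia.
  - specialize (rank_top x); lia.
  - specialize (rank_top x).
    destruct (Nat.leb_spec (rank y) (rank z)); lia.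
Defined.

End Chain.

Inductive two := two0 | two1.
Inductive three := three0 | threem | three1.
Inductive four := four0 | four1 | four2 | four3.

Ltac finite_cases :=
  intros; repeat match goal with
  | x : ?T |- _ =>
      let T' := eval hnf in T in
      match T' with two => destruct x | three => destruct x | four => destruct x end
  end; simpl in *; try discriminate; reflexivity.

Definition rank2 (x : two) : nat := match x with two0 => 0 | two1 => 1 end.
Definition rank3 (x : three) : nat :=
  match x with three0 => 0 | threem => 1 | three1 => 2 end.
Definition rank4 (x : four) : nat :=
  match x with four0 => 0 | four1 => 1 | four2 => 2 | four3 => 3 end.

Definition Two : HSL :=
  chain two rank2 two1 ltac:(finite_cases) ltac:(intros []; simpl; lia).
Definition Three : HSL :=
  chain three rank3 three1 ltac:(finite_cases) ltac:(intros []; simpl; lia).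
Definition Four : HSL :=
  chain four rank4 four3 ltac:(finite_cases) ltac:(intros []; simpl; lia).

Definition kappa4 : hom Two Four :=
  MkHom Two Four (fun x => match x with two0 => four2 | two1 => four3 end)
    ltac:(finite_cases) ltac:(finite_cases) ltac:(finite_cases).
Definition alpha4 : hom Four Three :=
  MkHom Four Three
    (fun x => match x with four0 => three0 | four1 => threem | _ => three1 end)
    ltac:(finite_cases) ltac:(finite_cases) ltac:(finite_cases).
Definition beta4 : hom Three Four :=
  MkHom Three Four
    (fun x => match x with three0 => four0 | threem => four1 | three1 => four3 end)
    ltac:(finite_cases) ltac:(finite_cases) ltac:(finite_cases).

Definition kappa3 : hom Two Three :=
  MkHom Two Three (fun x => match x with two0 => threem | two1 => three1 end)
    ltac:(finite_cases) ltac:(finite_cases) ltac:(finite_cases).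
Definition alpha3 : hom Three Two :=
  MkHom Three Two (fun x => match x with three0 => two0 | _ => two1 end)
    ltac:(finite_cases) ltac:(finite_cases) ltac:(finite_cases).
Definition beta3 : hom Two Three :=
  MkHom Two Three (fun x => match x with two0 => three0 | two1 => three1 end)
    ltac:(finite_cases) ltac:(finite_cases) ltac:(finite_cases).

Lemma kappa4_ker : is_kernel kappa4 alpha4.
Proof.
  apply (is_kernel_of_retraction kappa4 alpha4
           (fun z => match z with four3 => two1 | _ => two0 end));
    finite_cases.
Qed.

Lemma kappa3_ker : is_kernel kappa3 alpha3.
Proof.
  apply (is_kernel_of_retraction kappa3 alpha3
           (fun z => match z with three1 => two1 | _ => two0 end));
    finite_cases.
Qed.

Definition E4 : SplitExt Two :=
  MkSplitExt Two Four Three kappa4 alpha4 beta4 ltac:(finite_cases) kappa4_ker.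
Definition E3 : SplitExt Two :=
  MkSplitExt Two Three Two kappa3 alpha3 beta3 ltac:(finite_cases) kappa3_ker.

Definition U1 : se_mor E3 E4 :=
  MkSeMor Two E3 E4
    (MkHom Three Four
       (fun x => match x with three0 => four0 | threem => four2 | three1 => four3 end)
       ltac:(finite_cases) ltac:(finite_cases) ltac:(finite_cases))
    (MkHom Two Three (fun x => match x with two0 => three0 | two1 => three1 end)
       ltac:(finite_cases) ltac:(finite_cases) ltac:(finite_cases))
    ltac:(finite_cases) ltac:(finite_cases) ltac:(finite_cases).

Definition U2 : se_mor E3 E4 :=
  MkSeMor Two E3 E4
    (MkHom Three Four
       (fun x => match x with three0 => four1 | threem => four2 | three1 => four3 end)
       ltac:(finite_cases) ltac:(finite_cases) ltac:(finite_cases))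
    (MkHom Two Three (fun x => match x with two0 => threem | two1 => three1 end)
       ltac:(finite_cases) ltac:(finite_cases) ltac:(finite_cases))
    ltac:(finite_cases) ltac:(finite_cases) ltac:(finite_cases).

Lemma kernel_from_Two_bottom_not_top {A B : HSL} (k : hom Two A) (a : hom A B) :
  is_kernel k a -> k two0 <> htop.
Proof.
  intros Hk Htop.
  assert (Hzero_id : forall y : Two, k (zero_hom Two Two y) = k (id_hom Two y)).
  { intros []; [simpl; rewrite Htop; apply hom_top | reflexivity]. }
  discriminate (is_kernel_mono k a Hk Two _ _ Hzero_id two0).
Qed.

Lemma subterminal_under_E4_kills_kernel (S : SplitExt Two) (F : se_mor E4 S) :
  subterminal S -> kappa S two0 = htop.
Proof.
  intros HS.
  assert (Hm0 : morB F (three0 : Three) = morB F (threem : Three))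
    by exact (proj2 (HS E3 (comp_mor F U1) (comp_mor F U2)) two0).
  (* In B, m => 0 = 0. *)
  assert (H0 : morB F (three0 : Three) = htop)
    by exact (hom_imp_eq_top (morB F) threem three0 (eq_sym Hm0)).
  assert (Hbeta : morA F (beta E4 three0) = htop)
    by (rewrite (mor_beta _ _ F), H0; apply hom_top).
  rewrite <- (mor_kappa _ _ F).
  exact (hom_top_le (morA F) (beta E4 three0) (kappa E4 two0) eq_refl Hbeta).
Qed.

Theorem mainTheorem6 : ~ action_accessible_HSLat.
Proof.
  intros Hacc.
  destruct (Hacc Two E4) as [S [HS [F]]].
  exact (kernel_from_Two_bottom_not_top (kappa S) (alpha S) (kappa_ker _ S)
           (subterminal_under_E4_kills_kernel S F HS)).
Qed.
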